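(* Let $K$ be a subgroup of $\mathrm{Spin}_8\subset\mathrm{Spin}_{10,1}$ and let $N$ be a subgroup of the null-rotation group $\{\mathbb{1}+\sum_\mu c_\mu\Sigma_{+\mu}: c\in\mathbb{R}^9\}$ containing a non-identity element; let $G$ be the subgroup generated by $K$ and $N$. For a subgroup $H$ write $\Delta^H$ for the $H$-invariant spinors, and set $\Delta^K_\pm=\Delta^K\cap\ker\Gamma_\pm$. Then: (i) $\Delta^K=\Delta^K_+\oplus\Delta^K_-$, $\Gamma_\pm$ restricts to an isomorphism $\Delta^K_\mp\to\Delta^K_\pm$, and $\dim\Delta^K_+=\dim\Delta^K_-=\tfrac12\dim\Delta^K$; $\dim\Delta^K$ is even; (ii) $\Delta^G=\Delta^K_+$, so $\dim\Delta^G=\tfrac12\dim\Delta^K$; (iii) if $\pi$ is a unit simple $(5,1)$-vector whose plane contains $e_0$ and $e_9$, and $\Delta(\pm\pi)=\{\varepsilon:\pi\cdot\varepsilon=\pm\varepsilon\}$, then $\Gamma_+$ maps $\Delta^K_-\cap\Delta(\pi)$ isomorphically onto $\Delta^K_+\cap\Delta(-\pi)$ and $\Delta^K_-\cap\Delta(-\pi)$ isomorphically onto $\Delta^K_+\cap\Delta(\pi)$; in particular $\dim(\Delta(\pi)\cap\Delta^G)\le\tfrac12\dim\Delta^K$.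
   Context: Let $\mathbb{M}^{10,1}$ be $\mathbb{R}^{11}$ with orthonormal basis $e_0,e_1,\dots,e_9,e_\natural$ and Lorentzian metric $\eta$ with $\eta(e_0,e_0)=-1$ and $\eta(e_M,e_M)=+1$ for $M\neq 0$. The Clifford algebra $\mathrm{C}\ell_{1,10}$ is generated by $\Gamma_M$, $M\in\{0,1,\dots,9,\natural\}$, with $\Gamma_M\Gamma_N+\Gamma_N\Gamma_M=2\eta_{MN}\mathbb{1}$; simple multivectors of orthogonal vectors act by Clifford products. $\Delta$ denotes the $32$-dimensional real irreducible representation of $\mathrm{C}\ell_{1,10}$ on which $\Gamma_0\Gamma_1\cdots\Gamma_9\Gamma_\natural=-\mathbb{1}$. $\Sigma_{MN}=-\tfrac12\Gamma_M\Gamma_N$; $\mathrm{Spin}_8$ is the connected subgroup of $\mathrm{Spin}_{10,1}$ with Lie algebra spanned by $\Sigma_{ij}$, $1\le i<j\le 8$. $\Gamma_\pm=\Gamma_0\pm\Gamma_9$ and $\Sigma_{+\mu}=-\tfrac12\Gamma_+\Gamma_\mu$ for $\mu\in\{1,\dots,8,\natural\}$. *)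

From HB Require Import structures.
From mathcomp Require Import all_boot all_order all_algebra.
From mathcomp Require Import all_classical all_reals all_analysis.
Set Implicit Arguments. Unset Strict Implicit. Unset Printing Implicit Defensive.
Import Order.TTheory GRing.Theory Num.Theory.
Import numFieldNormedType.Exports.
Local Open Scope classical_set_scope.
Local Open Scope ring_scope.

(* Index conventions: 'I_11 indexes e_0, e_1, ..., e_9, e_natural;
   index 0 is e_0 (timelike), index 9 is e_9, index 10 is e_natural. *)
Definition i9 : 'I_11 := @Ordinal 11 9 isT.
Definition inat : 'I_11 := @Ordinal 11 10 isT.

Section Clifford.
Variable R : realType.

Definition eta (M N : 'I_11) : R :=
  if M == N then (if M == ord0 then -1 else 1) else 0.

Definition etaV (x y : 'rV[R]_11) : R :=
  \sum_(M < 11) \sum_(N < 11) eta M N * x ord0 M * y ord0 N.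

Definition evec (M : 'I_11) : 'rV[R]_11 := \row_(N < 11) (N == M)%:R.

Definition clifford_rep (Gam : 'I_11 -> 'M[R]_32) : Prop :=
  (forall M N : 'I_11, Gam M * Gam N + Gam N * Gam M = (2 * eta M N)%:M)
  /\ \prod_(M < 11) Gam M = - 1.

Variable Gam : 'I_11 -> 'M[R]_32.

Definition GamV (x : 'rV[R]_11) : 'M[R]_32 := \sum_(M < 11) x ord0 M *: Gam M.

Definition Sig (M N : 'I_11) : 'M[R]_32 := - (2%:R^-1) *: (Gam M * Gam N).
Definition Gplus : 'M[R]_32 := Gam ord0 + Gam i9.
Definition Gminus : 'M[R]_32 := Gam ord0 - Gam i9.
Definition SigPlus (mu : 'I_11) : 'M[R]_32 := - (2%:R^-1) *: (Gplus * Gam mu).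

Definition mexp (X : 'M[R]_32) : 'M[R]_32 :=
  lim (series (fun k : nat => (k`!%:R)^-1 *: X ^+ k) @ \oo).

Definition spin8_alg (X : 'M[R]_32) : Prop :=
  exists c : 'I_11 -> 'I_11 -> R,
    X = \sum_(i < 11 | (1 <= i)%N) \sum_(j < 11 | (i < j)%N && (j <= 8)%N)
          c i j *: Sig i j.

(* Spin_8: the connected Lie subgroup with Lie algebra spin8_alg, i.e. the
   group generated by exp of its Lie algebra (finite products of exponentials) *)
Definition Spin8 : set 'M[R]_32 :=
  [set g | exists s : seq 'M[R]_32, (forall X, X \in s -> spin8_alg X) /\
                                     g = \prod_(X <- s) mexp X].

Definition NullRot : set 'M[R]_32 :=
  [set g | exists c : 'I_11 -> R,
     g = 1 + \sum_(mu < 11 | (mu != ord0) && (mu != i9)) c mu *: SigPlus mu].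

End Clifford.

Definition is_subgroup (R : realType) (H : set 'M[R]_32) : Prop :=
  H 1 /\ (forall a b, H a -> H b -> H (a * b)) /\
  (forall a, H a -> a \in unitmx /\ H (invmx a)).

Definition gen_subgroup (R : realType) (S : set 'M[R]_32) : set 'M[R]_32 :=
  [set g | forall H, is_subgroup H -> S `<=` H -> H g].

Definition invariants (R : realType) (H : set 'M[R]_32) : set 'cV[R]_32 :=
  [set v | forall h, H h -> h *m v = v].

Definition kerM (R : realType) (A : 'M[R]_32) : set 'cV[R]_32 :=
  [set v | A *m v = 0].

(* the +1 eigenspace of a matrix (Delta(pi) for pi acting by P) *)
Definition fixsp (R : realType) (A : 'M[R]_32) : set 'cV[R]_32 :=
  [set v | A *m v = v].

Definition vspace_of (R : realType) (S : set 'cV[R]_32) : {vspace 'cV[R]_32} :=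
  xget 0%VS [set U : {vspace 'cV[R]_32} | forall v, v \in U <-> S v].
Definition dimS (R : realType) (S : set 'cV[R]_32) : nat := \dim (vspace_of S).

Definition iso_onto (R : realType) (A : 'M[R]_32) (S T : set 'cV[R]_32) : Prop :=
  (forall v, S v -> T (A *m v)) /\
  (forall v w, S v -> S w -> A *m v = A *m w -> v = w) /\
  (forall w, T w -> exists v, S v /\ A *m v = w).

Definition direct_sum (R : realType) (S A B : set 'cV[R]_32) : Prop :=
  (forall v, S v <-> exists a b, A a /\ B b /\ v = a + b) /\
  (forall v, A v -> B v -> v = 0).

From Pilot Require Import Defs.
From HB Require Import structures.
From mathcomp Require Import all_boot all_order all_algebra.
From mathcomp Require Import all_classical all_reals all_analysis.
From mathcomp Require Import ring zify.
Import Order.TTheory GRing.Theory Num.Theory.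
Import numFieldNormedType.Exports.
Local Open Scope classical_set_scope.
Local Open Scope ring_scope.

(* Gamma_+ and Gamma_- are nilpotent with Gamma_+ Gamma_- + Gamma_- Gamma_+ = -4,
   so every space stable under both is (ker Gamma_+) (+) (ker Gamma_-), and the
   identity -4 v = Gamma_+ Gamma_- v + Gamma_- Gamma_+ v shows that Gamma_+ and
   Gamma_- exchange the two summands isomorphically.  Spin_8 is generated by
   exponentials of combinations of Gamma_i Gamma_j with 1 <= i < j <= 8, which
   commute with Gamma_0 and Gamma_9, so Delta^K is stable under Gamma_+-.
   A null rotation is 1 - Gamma_+ X / 2 with X = sum c_mu Gamma_mu; it fixes
   ker Gamma_+, and when it is not the identity X^2 = |c|^2 is a nonzero scalar,
   which forces its fixed spinors into ker Gamma_+; hence Delta^G is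
   Delta^K_+.  Finally, the volume element of an orthonormal 6-frame
   anticommutes with every vector of its span, in particular with Gamma_0 and
   Gamma_9, so Gamma_+- exchange its +1 and -1 eigenspaces. *)

Section Commutant.
Context {R : realType} {n : nat} (A : 'M[R]_n).

Lemma commutator_entry_continuous (i j : 'I_n) :
  continuous (fun Y : 'M[R]_n => (A *m Y - Y *m A) i j).
Proof.
have -> : (fun Y : 'M[R]_n => (A *m Y - Y *m A) i j) =
    (fun Y => \sum_(k <- index_enum 'I_n) (A i k * Y k j - Y i k * A k j)).
  by apply: funext => Y; rewrite !mxE -sumrB.
apply: continuous_big => [[x y]|k _ Y]; first exact: add_continuous.
apply: (@continuousB _ _ _ (fun Y : 'M[R]_n => A i k * Y k j)
                        (fun Y => Y i k * A k j)).
- apply: (@continuousM _ _ _ (fun Y : 'M[R]_n => Y k j)); first exact: cst_continuous.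
  exact: coord_continuous.
- apply: (@continuousM _ _ (fun Y : 'M[R]_n => Y i k)); last exact: cst_continuous.
  exact: coord_continuous.
Qed.

Lemma comm_lim (u : nat -> 'M[R]_n) :
  (forall k, GRing.comm A (u k)) -> GRing.comm A (lim (u @ \oo)).
Proof.
rewrite /GRing.comm -!mulmxE => Au.
have [cvu|dvu] := pselect (cvg (u @ \oo)); last first.
  (* the limit of a divergent sequence is the default point, the zero matrix *)
  have -> : lim (u @ \oo) = 0.
    by rewrite (dvgP dvu); apply/matrixP => i j; rewrite !mxE.
  by rewrite mulmx0 mul0mx.
apply/eqP; rewrite -subr_eq0; apply/eqP/matrixP => i j; rewrite [RHS]mxE.
have entry_cvg := continuous_cvg _ (commutator_entry_continuous i j _) cvu.
have entry0 : \forall k \near \oo, [set x : R | x = 0]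
    (((fun Y : 'M[R]_n => (A *m Y - Y *m A) i j) \o u) k).
  by apply: nearW => k /=; rewrite Au subrr mxE.
exact: (closed_cvg _ (@closed_eq R 0) entry0 _ (entry_cvg eventually_filter)).
Qed.

End Commutant.

Lemma comm_mexp (R : realType) (A X : 'M[R]_32) :
  GRing.comm A X -> GRing.comm A (mexp X).
Proof.
move=> AX; apply: comm_lim => k; apply: commr_sum => i _.
by rewrite /GRing.comm -scalerAl -scalerAr (commrX i AX).
Qed.

Lemma commrZ (R : comNzRingType) (T : algType R) (a : R) (x y : T) :
  GRing.comm x y -> GRing.comm x (a *: y).
Proof. by rewrite /GRing.comm -scalerAl -scalerAr => ->. Qed.

Lemma lightcone_pair (T : pzRingType) (a b : T) :
  a * a = -1 -> b * b = 1 -> a * b + b * a = 0 ->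
  [/\ (a + b) * (a + b) = 0, (a - b) * (a - b) = 0 &
      (a + b) * (a - b) + (a - b) * (a + b) = - 4%:R].
Proof.
move=> aa bb ab; split.
- have -> : (a + b) * (a + b) = (a * a + b * b) + (a * b + b * a).
    by rewrite !mulrDr !mulrDl (addrC (a * b)) addrACA (addrC (b * a)).
  by rewrite aa bb ab addNr addr0.
- have -> : (a - b) * (a - b) = (a * a + b * b) - (a * b + b * a).
    rewrite !mulrDr !mulrDl !mulrN !mulNr opprD opprK [- (a * b) + _]addrC.
    by rewrite addrACA [- (b * a) + _]addrC.
  by rewrite aa bb ab addNr subr0.
have -> : (a + b) * (a - b) + (a - b) * (a + b) = (a * a - b * b) *+ 2.
  rewrite !mulrDr !mulrDl !mulrN !mulNr mulr2n.
  set x := a * a; set y := a * b; set z := b * a; set w := b * b.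
  rewrite addrACA (addrACA x) subrr addr0 (addrACA (- y)) addNr add0r.
  by rewrite [RHS]addrACA.
by rewrite aa bb -opprD mulNrn -mulr2n -mulrnA.
Qed.

Lemma scalar_mx_half (R : fieldType) (n : nat) (Y : 'M[R]_n) (t : R) :
  2 != 0 :> R -> Y + Y = (2 * t)%:M -> Y = t%:M.
Proof.
move=> two0; rewrite -mulr2n -scaler_nat => /(congr1 (fun Z => 2^-1 *: Z)).
by rewrite scalerA mulVf // scale1r scale_scalar_mx mulrA mulVf // mul1r.
Qed.

Lemma mulmx_mulr (R : pzRingType) (n : nat) (A B : 'M[R]_n) (v : 'cV[R]_n) :
  (A * B) *m v = A *m (B *m v).
Proof. by rewrite mulmxA. Qed.

Lemma comm_prod_sign (R : comNzRingType) (T : algType R) (I : Type) (r : seq I)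
    (x : T) (f : I -> T) (s : I -> R) :
  (forall l, x * f l = s l *: (f l * x)) ->
  x * \prod_(l <- r) f l = (\prod_(l <- r) s l) *: (\prod_(l <- r) f l * x).
Proof.
move=> xf; elim: r => [|a r IH]; first by rewrite !big_nil mulr1 mul1r scale1r.
by rewrite !big_cons mulrA xf -scalerAl -[f a * x * _]mulrA IH -scalerAr scalerA mulrA.
Qed.

Section Subspaces.
Context {F : fieldType} {vT : vectType F}.

Definition is_subspace (S : set vT) : Prop :=
  S 0 /\ forall (a : F) u v, S u -> S v -> S (a *: u + v).

Lemma subspaceZ S a u : is_subspace S -> S u -> S (a *: u).
Proof. by move=> [S0 Slin] Su; rewrite -[a *: u]addr0; apply: Slin. Qed.

Lemma subspaceD S u v : is_subspace S -> S u -> S v -> S (u + v).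
Proof. by move=> [S0 Slin] Su Sv; rewrite -[u]scale1r; apply: Slin. Qed.

Lemma subspaceI {S T : set vT} :
  is_subspace S -> is_subspace T -> is_subspace (S `&` T).
Proof.
move=> [S0 Slin] [T0 Tlin]; split=> // a u v [Su Tu] [Sv Tv].
by split; [apply: Slin | apply: Tlin].
Qed.

Lemma subspace_vspace {S : set vT} : is_subspace S ->
  exists U : {vspace vT}, forall v, v \in U <-> S v.
Proof.
move=> hS.
pose inS d := `[< exists U : {vspace vT}, \dim U = d /\ forall v, v \in U -> S v >].
have inS0 : exists d, inS d.
  exists 0%N; apply/asboolP; exists 0%VS; rewrite dimv0; split=> // v.
  by rewrite memv0 => /eqP ->; case: hS.
have inS_bounded d : inS d -> (d <= \dim (fullv : {vspace vT}))%N.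
  by move=> /asboolP [U [<- _]]; apply: dimvS; apply: subvf.
(* a vspace of maximal dimension inside S already contains all of S *)
have [d /asboolP [U [dU US]] dmax] := ex_maxnP inS0 inS_bounded.
exists U => v; split=> [|Sv]; first exact: US.
have UvS w : w \in (U + <[v]>)%VS -> S w.
  move=> /memv_addP [u uU [x /vlineP [k ->] ->]].
  by rewrite addrC; apply: (proj2 hS) => //; apply: US.
have : (\dim (U + <[v]>) <= d)%N by apply: dmax; apply/asboolP; exists (U + <[v]>)%VS.
rewrite -dU => Uv_le; have /eqP -> : (U == U + <[v]>)%VS by rewrite eqEdim addvSl.
exact: subvP (addvSr U _) _ (memv_line v).
Qed.
End Subspaces.

Section SpinorSubspaces.
Context {R : realType}.
Implicit Types (S T : set 'cV[R]_32) (A : 'M[R]_32).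

Lemma subspace_invariants (K : set 'M[R]_32) : is_subspace (invariants K).
Proof.
split=> [h _|a u v uK vK h Kh]; first by rewrite mulmx0.
by rewrite mulmxDr -scalemxAr uK // vK.
Qed.

Lemma subspace_kerM A : is_subspace (kerM A).
Proof.
split=> [|a u v]; rewrite /kerM /= ?mulmx0 // => Au Av.
by rewrite mulmxDr -scalemxAr Au Av scaler0 addr0.
Qed.

Lemma subspace_fixsp A : is_subspace (fixsp A).
Proof.
split=> [|a u v]; rewrite /fixsp /= ?mulmx0 // => Au Av.
by rewrite mulmxDr -scalemxAr Au Av.
Qed.

Lemma subspace_setT : is_subspace (@setT 'cV[R]_32).
Proof. by []. Qed.

Lemma dimS_vspace {S} {U : {vspace 'cV[R]_32}} :
  (forall v, v \in U <-> S v) -> dimS S = \dim U.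
Proof.
move=> US; rewrite /dimS /vspace_of.
have exU : exists U : {vspace 'cV[R]_32}, forall v, v \in U <-> S v by exists U.
have := xgetPex 0%VS exU; set V := xget _ _ => VS.
by congr (\dim _); apply/vspaceP => v; apply/idP/idP => h; [exact/US/VS | exact/VS/US].
Qed.

Lemma dimS_le {S T} : is_subspace S -> is_subspace T -> S `<=` T ->
  (dimS S <= dimS T)%N.
Proof.
move=> /subspace_vspace [U US] /subspace_vspace [V VT] ST.
rewrite (dimS_vspace US) (dimS_vspace VT); apply/dimvS/subvP => x /US Sx.
exact/VT/ST.
Qed.

Lemma dimS_direct_sum {S S1 S2} : is_subspace S1 -> is_subspace S2 ->
  direct_sum S S1 S2 -> dimS S = (dimS S1 + dimS S2)%N.
Proof.
move=> /subspace_vspace [U US1] /subspace_vspace [V VS2] [Ssum S12].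
have UVS v : v \in (U + V)%VS <-> S v.
  split=> [/memv_addP [a /US1 aU [b /VS2 bV ->]]|/Ssum [a [b [/US1 aU [/VS2 bV ->]]]]].
    by apply/Ssum; exists a, b.
  exact: memv_add.
rewrite (dimS_vspace UVS) (dimS_vspace US1) (dimS_vspace VS2) dimv_disjoint_sum //.
apply/eqP; rewrite -subv0; apply/subvP => x /memv_capP [/US1 xU /VS2 xV].
by rewrite memv0 (S12 x xU xV).
Qed.

Lemma dimS_iso {A S T} : is_subspace S -> is_subspace T -> iso_onto A S T ->
  dimS S = dimS T.
Proof.
move=> hS /subspace_vspace [V VT] [AST [Ainj Aonto]].
have [U US] := subspace_vspace hS.
rewrite (dimS_vspace US) (dimS_vspace VT).
pose f : 'End('cV[R]_32) := linfun (mulmx A).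
have fU : (f @: U)%VS = V.
  apply/vspaceP => w; apply/idP/idP.
    by move=> /memv_imgP [u /US Su ->]; rewrite lfunE; apply/VT/AST.
  move=> /VT /Aonto [u [Su <-]]; rewrite -[A *m u](lfunE (mulmx A)).
  exact/memv_img/US.
rewrite -fU limg_dim_eq //; apply/eqP; rewrite -subv0; apply/subvP => x.
move=> /memv_capP [/US Sx]; rewrite memv_ker lfunE => /eqP Ax.
by rewrite memv0; apply/eqP/Ainj; rewrite // ?Ax ?mulmx0 //; case: hS.
Qed.

Lemma fixsp_anticomm A Y v :
  A * Y = - (Y * A) -> fixsp Y v -> fixsp (- Y) (A *m v).
Proof.
by rewrite /fixsp /= => AY Yv; rewrite -mulmx_mulr mulNr -AY mulmx_mulr Yv.
Qed.

End SpinorSubspaces.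

Section NilpotentPair.
Context {R : realType} {A B : 'M[R]_32} {c : R}.
Hypotheses (c_neq0 : c != 0) (AA : A * A = 0) (BB : B * B = 0)
  (AB : A * B + B * A = c%:M).

Lemma nilpotent_pair_decomp (v : 'cV[R]_32) :
  v = c^-1 *: (A *m (B *m v)) + c^-1 *: (B *m (A *m v)).
Proof.
rewrite -scalerDr -!mulmx_mulr -mulmxDl AB mul_scalar_mx scalerA.
by rewrite mulVf // scale1r.
Qed.

Lemma kerM_nilpotent_pair v : kerM A v -> kerM B v -> v = 0.
Proof.
rewrite /kerM /= => Av Bv.
by rewrite [LHS]nilpotent_pair_decomp Av Bv !mulmx0 scaler0 addr0.
Qed.

Lemma mulmx_nilpotentA (v : 'cV[R]_32) : A *m (A *m v) = 0.
Proof. by rewrite -mulmx_mulr AA mul0mx. Qed.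

Lemma mulmx_nilpotentB (v : 'cV[R]_32) : B *m (B *m v) = 0.
Proof. by rewrite -mulmx_mulr BB mul0mx. Qed.

Context {S : set 'cV[R]_32}.
Hypotheses (S_subspace : is_subspace S)
  (SA : forall v, S v -> S (A *m v)) (SB : forall v, S v -> S (B *m v)).

Lemma direct_sum_nilpotent_pair :
  direct_sum S (S `&` kerM A) (S `&` kerM B).
Proof.
split=> [v|v [_ Av] [_ Bv]]; last exact: kerM_nilpotent_pair.
split=> [Sv|[a [b [[Sa _] [[Sb _] ->]]]]]; last exact: subspaceD.
exists (c^-1 *: (A *m (B *m v))), (c^-1 *: (B *m (A *m v))).
split; [split | split; [split | exact: nilpotent_pair_decomp]].
- by apply: subspaceZ => //; apply/SA/SB.
- by rewrite /kerM /= -scalemxAr mulmx_nilpotentA scaler0.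
- by apply: subspaceZ => //; apply/SB/SA.
- by rewrite /kerM /= -scalemxAr mulmx_nilpotentB scaler0.
Qed.

Lemma iso_onto_nilpotent_pair (Q1 Q2 : set 'cV[R]_32) :
  is_subspace Q1 ->
  (forall v, Q1 v -> Q2 (A *m v)) -> (forall w, Q2 w -> Q1 (B *m w)) ->
  iso_onto A ((S `&` kerM B) `&` Q1) ((S `&` kerM A) `&` Q2).
Proof.
move=> Q1_subspace Q12 Q21; split; last split.
- move=> v [[Sv _] Qv]; split; last exact: Q12.
  by split; [apply: SA | apply: mulmx_nilpotentA].
- move=> v w [[_ Bv] _] [[_ Bw] _] Avw; apply/eqP; rewrite -subr_eq0; apply/eqP.
  rewrite /kerM /= in Bv Bw.
  by apply: kerM_nilpotent_pair; rewrite /kerM /= mulmxBr ?Avw ?Bv ?Bw subrr.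
move=> w [[Sw Aw] Qw]; exists (c^-1 *: (B *m w)); split.
  split; last by apply: subspaceZ => //; apply: Q21.
  split; first by apply: subspaceZ => //; apply: SB.
  by rewrite /kerM /= -scalemxAr mulmx_nilpotentB scaler0.
rewrite /kerM /= in Aw.
by rewrite -scalemxAr {2}(nilpotent_pair_decomp w) Aw mulmx0 scaler0 addr0.
Qed.

End NilpotentPair.

Section GeneratedSubgroup.
Context {R : realType}.
Implicit Type S : set 'M[R]_32.

Lemma sub_gen_subgroup S : S `<=` gen_subgroup S.
Proof. by move=> g Sg H _; apply. Qed.

Lemma stabilizer_subgroup (v : 'cV[R]_32) :
  is_subgroup [set g : 'M[R]_32 | g \in unitmx /\ g *m v = v].
Proof.
split; first by split; [exact: unitmx1 | exact: mul1mx].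
split=> [a b [ua va] [ub vb]|a [ua va]].
  by split; [rewrite unitmx_mul ua ub | rewrite mulmx_mulr vb va].
by split=> //; split; [rewrite unitmx_inv | rewrite -{1}va mulKmx].
Qed.

Lemma subgroup_unitmx {S} : is_subgroup S -> forall g, S g -> g \in unitmx.
Proof. by move=> [_ [_ Sinv]] g /Sinv []. Qed.

Lemma invariants_gen_subgroup S : (forall g, S g -> g \in unitmx) ->
  invariants (gen_subgroup S) = invariants S.
Proof.
move=> S_unit; apply/seteqP; split=> v vS g; first by move/sub_gen_subgroup; apply: vS.
by move/(_ _ (stabilizer_subgroup v)) => []// h Sh; split; [apply: S_unit | apply: vS].
Qed.

Lemma invariants_setU S1 S2 :
  invariants (S1 `|` S2) = invariants S1 `&` invariants S2.
Proof.
apply/seteqP; split=> [v vS|v [vS1 vS2] g [/vS1|/vS2] //].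
by split=> g Sg; apply: vS; [left | right].
Qed.

Lemma invariants_mulmx S (A : 'M[R]_32) v :
  (forall g, S g -> GRing.comm A g) -> invariants S v -> invariants S (A *m v).
Proof. by move=> AS vS g Sg; rewrite -mulmx_mulr -(AS g Sg) mulmx_mulr (vS g Sg). Qed.

End GeneratedSubgroup.

Section Clifford.
Context {R : realType} {Gam : 'I_11 -> 'M[R]_32}.
Local Notation eta := (@Defs.eta R).
Hypothesis Gam_anticomm : forall M N : 'I_11,
  Gam M * Gam N + Gam N * Gam M = (2 * eta M N)%:M.

Lemma Gam_sq M : Gam M * Gam M = (eta M M)%:M.
Proof. by apply: scalar_mx_half; rewrite ?pnatr_eq0 ?Gam_anticomm. Qed.

Lemma Gam_anticomm_neq {M N : 'I_11} : M != N -> Gam M * Gam N = - (Gam N * Gam M).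
Proof.
move=> MN; apply/eqP; rewrite -addr_eq0 Gam_anticomm.
by rewrite /eta (negbTE MN) mulr0 raddf0.
Qed.

Lemma Gplus_Gminus_relations :
  [/\ Gplus Gam * Gplus Gam = 0, Gminus Gam * Gminus Gam = 0 &
      Gplus Gam * Gminus Gam + Gminus Gam * Gplus Gam = (-4)%:M].
Proof.
have [] := @lightcone_pair _ (Gam ord0) (Gam i9).
- by rewrite Gam_sq /eta eqxx /= raddfN.
- by rewrite Gam_sq /eta eqxx.
- by rewrite Gam_anticomm /eta mulr0 raddf0.
by move=> pp mm pm; split=> //; rewrite /Gplus /Gminus pm rmorphN rmorph_nat.
Qed.

Lemma GamV_anticomm x y :
  GamV Gam x * GamV Gam y + GamV Gam y * GamV Gam x = (2 * etaV x y)%:M.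
Proof.
rewrite /GamV !mulr_suml.
under eq_bigr do rewrite mulr_sumr.
under [X in _ + X]eq_bigr do rewrite mulr_sumr.
rewrite [X in _ + X]exchange_big -big_split /= mulr_sumr raddf_sum.
apply: eq_bigr => M _; rewrite -big_split mulr_sumr raddf_sum.
apply: eq_bigr => N _ /=.
rewrite -!scalerAl -!scalerAr !scalerA [y _ N * _]mulrC -scalerDr Gam_anticomm.
rewrite scale_scalar_mx; congr (_%:M).
by rewrite -[RHS]/((eta M N * x ord0 M * 2) * y ord0 N); ring.
Qed.

Lemma GamV_anticomm_orth x y :
  etaV x y = 0 -> GamV Gam x * GamV Gam y = - (GamV Gam y * GamV Gam x).
Proof. by move=> xy; apply/eqP; rewrite -addr_eq0 GamV_anticomm xy mulr0 raddf0. Qed.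

Lemma GamV_sum (I : finType) (a : I -> R) (w : I -> 'rV[R]_11) :
  GamV Gam (\sum_k a k *: w k) = \sum_k a k *: GamV Gam (w k).
Proof.
rewrite /GamV; under eq_bigr do rewrite summxE scaler_suml.
rewrite exchange_big; apply: eq_bigr => k _; rewrite scaler_sumr.
by apply: eq_bigr => M _; rewrite mxE scalerA.
Qed.

Lemma GamV_evec M : GamV Gam (evec R M) = Gam M.
Proof.
rewrite /GamV (bigD1 M) //= big1 => [|N NM]; rewrite mxE.
  by rewrite eqxx scale1r addr0.
by rewrite (negbTE NM) scale0r.
Qed.

Lemma GamV_sq x : GamV Gam x * GamV Gam x = (etaV x x)%:M.
Proof. by apply: scalar_mx_half; rewrite ?pnatr_eq0 ?GamV_anticomm. Qed.

Lemma etaV_diag x : etaV x x = \sum_M eta M M * x ord0 M ^+ 2.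
Proof.
apply: eq_bigr => M _; rewrite (bigD1 M) //= big1 ?addr0 => [|N NM].
  by rewrite mulrA.
by rewrite /eta eq_sym (negbTE NM) !mul0r.
Qed.

Lemma comm_Gam_bivector M i j :
  i != M -> j != M -> GRing.comm (Gam M) (Gam i * Gam j).
Proof.
rewrite ![_ == M]eq_sym => Mi Mj.
rewrite /GRing.comm mulrA (Gam_anticomm_neq Mi) mulNr -[Gam i * Gam M * _]mulrA.
by rewrite (Gam_anticomm_neq Mj) mulrN opprK mulrA.
Qed.

Lemma comm_spin8_alg M X :
  (M == ord0) || (M == i9) -> spin8_alg Gam X -> GRing.comm (Gam M) X.
Proof.
move=> hM [c ->].
have neM (k : 'I_11) : (1 <= k <= 8)%N -> k != M.
  by move=> hk; apply/eqP => kM; move: hk; rewrite kM; case/orP: hM => /eqP ->.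
apply: commr_sum => i i1; apply: commr_sum => j /andP [ij j8].
apply: commrZ; apply: commrZ; apply: comm_Gam_bivector; apply: neM; lia.
Qed.

Lemma comm_Spin8 M g :
  (M == ord0) || (M == i9) -> Spin8 Gam g -> GRing.comm (Gam M) g.
Proof.
move=> hM [s [hs ->]]; rewrite big_seq; apply: commr_prod => X /hs X8.
exact/comm_mexp/comm_spin8_alg.
Qed.

Lemma comm_Spin8_Gpm g :
  Spin8 Gam g -> GRing.comm (Gplus Gam) g /\ GRing.comm (Gminus Gam) g.
Proof.
move=> g8; have c0 := @comm_Spin8 ord0 g isT g8; have c9 := @comm_Spin8 i9 g isT g8.
split; apply/commr_sym; [apply: commrD | apply: commrD; last apply: commrN];
  exact/commr_sym.
Qed.

Definition Gam_transverse (c : 'I_11 -> R) : 'M[R]_32 :=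
  \sum_(mu < 11 | (mu != ord0) && (mu != i9)) c mu *: Gam mu.

Lemma NullRotE g :
  NullRot Gam g -> exists c, g = 1 - 2^-1 *: (Gplus Gam * Gam_transverse c).
Proof.
move=> [c ->]; exists c; congr (_ + _).
rewrite /Gam_transverse mulr_sumr scaler_sumr -sumrN; apply: eq_bigr => mu _.
by rewrite /SigPlus -scalerAr !scalerA mulrN scaleNr [c mu * _]mulrC.
Qed.

Lemma Gplus_Gam_transverse c :
  Gplus Gam * Gam_transverse c = - (Gam_transverse c * Gplus Gam).
Proof.
rewrite /Gam_transverse mulr_sumr mulr_suml -sumrN.
apply: eq_bigr => mu /andP [mu0 mu9].
rewrite eq_sym in mu0; rewrite eq_sym in mu9.
rewrite -scalerAr -scalerAl -scalerN /Gplus mulrDl mulrDr opprD.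
by rewrite (Gam_anticomm_neq mu0) (Gam_anticomm_neq mu9).
Qed.

Lemma Gam_transverse_sq c :
  Gam_transverse c * Gam_transverse c =
  (\sum_(mu < 11 | (mu != ord0) && (mu != i9)) c mu ^+ 2)%:M.
Proof.
pose x := \row_(mu < 11) if (mu != ord0) && (mu != i9) then c mu else 0.
have -> : Gam_transverse c = GamV Gam x.
  rewrite /Gam_transverse /GamV big_mkcond; apply: eq_bigr => mu _; rewrite mxE.
  by case: ifP => // _; rewrite scale0r.
rewrite GamV_sq etaV_diag [in RHS]big_mkcond; congr (_%:M); apply: eq_bigr => mu _.
rewrite mxE; case: ifP => [/andP [mu0 mu9]|_]; last by rewrite expr2 !mulr0.
by rewrite /eta eqxx (negbTE mu0) mul1r.
Qed.

Lemma NullRot_fix_kerGplus g (v : 'cV[R]_32) :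
  NullRot Gam g -> Gplus Gam *m v = 0 -> g *m v = v.
Proof.
move=> /NullRotE [c ->] Gv.
rewrite mulmxDl mul1mx mulNmx -scalemxAl Gplus_Gam_transverse.
by rewrite mulNmx -mulmxA Gv mulmx0 oppr0 scaler0 oppr0 addr0.
Qed.

Lemma NullRot_fixed_kerGplus g (v : 'cV[R]_32) :
  NullRot Gam g -> g <> 1 -> g *m v = v -> Gplus Gam *m v = 0.
Proof.
move=> /NullRotE [c ->] g1 gv.
have GXv : (Gplus Gam * Gam_transverse c) *m v = 0.
  move: gv; rewrite mulmxDl mul1mx mulNmx -scalemxAl -[X in _ = X]addr0.
  move/addrI/eqP; rewrite oppr_eq0 scaler_eq0 invr_eq0 pnatr_eq0 /=.
  by move/eqP.
have XGv : Gam_transverse c *m (Gplus Gam *m v) = 0.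
  by apply/eqP; rewrite -mulmx_mulr -oppr_eq0 -mulNmx -Gplus_Gam_transverse GXv.
have c_ne0 : \sum_(mu < 11 | (mu != ord0) && (mu != i9)) c mu ^+ 2 != 0.
  apply: contra_not_neq g1 => c0.
  suff -> : Gam_transverse c = 0 by rewrite mulr0 scaler0 subr0.
  apply: big1 => mu hmu; move/psumr_eq0P: c0 => /(_ (fun i _ => sqr_ge0 (c i))).
  by move/(_ mu hmu)/eqP; rewrite sqrf_eq0 => /eqP ->; rewrite scale0r.
have := congr1 (mulmx (Gam_transverse c)) XGv.
rewrite -mulmx_mulr Gam_transverse_sq mul_scalar_mx mulmx0 => /eqP.
by rewrite scaler_eq0 (negbTE c_ne0) => /eqP.
Qed.

Lemma invariants_NullRot {N : set 'M[R]_32} :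
  N `<=` NullRot Gam -> (exists n, N n /\ n <> 1) ->
  invariants N = kerM (Gplus Gam).
Proof.
move=> NNull [n [Nn n1]]; apply/seteqP; split => v; rewrite /kerM /invariants /=.
  by move=> vN; apply: (NullRot_fixed_kerGplus _ _ (NNull n Nn) n1); apply: vN.
by move=> Gv g Ng; apply: (NullRot_fix_kerGplus _ _ (NNull g Ng) Gv).
Qed.

Section VolumeElement.
Context {m : nat} {v : 'I_m -> 'rV[R]_11}.
Hypothesis v_orth : forall k l, k != l -> etaV (v k) (v l) = 0.
Let P := \prod_(k < m) GamV Gam (v k).

Lemma GamV_volume_anticomm k :
  GamV Gam (v k) * P = (-1) ^+ m.-1 *: (P * GamV Gam (v k)).
Proof.
rewrite (@comm_prod_sign _ _ _ _ _ _ (fun l => if l == k then 1 else -1)); last first.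
  move=> l; case: eqP => [->|/eqP lk]; first by rewrite scale1r.
  by rewrite scaleN1r GamV_anticomm_orth // v_orth // eq_sym.
congr (_ *: _); rewrite (bigD1 k) //= eqxx mul1r.
rewrite (eq_bigr (fun=> -1)) => [|l /negbTE -> //].
by rewrite prodr_const cardC1 card_ord.
Qed.

Lemma Gam_volume_anticomm M :
  (exists a : 'I_m -> R, evec R M = \sum_(k < m) a k *: v k) ->
  Gam M * P = (-1) ^+ m.-1 *: (P * Gam M).
Proof.
move=> [a E]; rewrite -GamV_evec E GamV_sum mulr_suml mulr_sumr scaler_sumr.
apply: eq_bigr => k _.
by rewrite -scalerAl GamV_volume_anticomm -scalerAr !scalerA [a k * _]mulrC.
Qed.

Lemma Gpm_volume_anticomm :
  (exists a : 'I_m -> R, evec R ord0 = \sum_(k < m) a k *: v k) ->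
  (exists a : 'I_m -> R, evec R i9 = \sum_(k < m) a k *: v k) ->
  Gplus Gam * P = (-1) ^+ m.-1 *: (P * Gplus Gam) /\
  Gminus Gam * P = (-1) ^+ m.-1 *: (P * Gminus Gam).
Proof.
move=> /Gam_volume_anticomm e0P /Gam_volume_anticomm e9P.
rewrite /Gplus /Gminus mulrDl mulrDr mulrBl mulrBr e0P e9P.
by rewrite scalerDr scalerBr.
Qed.

End VolumeElement.

Section InvariantSpinors.
Context {K : set 'M[R]_32}.
Hypothesis K_Spin8 : K `<=` Spin8 Gam.
Local Notation DK := (invariants K).
Local Notation DKp := (invariants K `&` kerM (Gplus Gam)).
Local Notation DKm := (invariants K `&` kerM (Gminus Gam)).

Let four_neq0 : -4 != 0 :> R. Proof. by rewrite oppr_eq0 pnatr_eq0. Qed.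

Let GpGp : Gplus Gam * Gplus Gam = 0.
Proof. by case: Gplus_Gminus_relations. Qed.

Let GmGm : Gminus Gam * Gminus Gam = 0.
Proof. by case: Gplus_Gminus_relations. Qed.

Let GpGm : Gplus Gam * Gminus Gam + Gminus Gam * Gplus Gam = (-4)%:M.
Proof. by case: Gplus_Gminus_relations. Qed.

Let GmGp : Gminus Gam * Gplus Gam + Gplus Gam * Gminus Gam = (-4)%:M.
Proof. by rewrite addrC GpGm. Qed.

Let DK_subspace : is_subspace DK := subspace_invariants K.

Let DK_Gplus v : DK v -> DK (Gplus Gam *m v).
Proof.
by apply: invariants_mulmx => k /K_Spin8 /comm_Spin8_Gpm [].
Qed.

Let DK_Gminus v : DK v -> DK (Gminus Gam *m v).
Proof.
by apply: invariants_mulmx => k /K_Spin8 /comm_Spin8_Gpm [].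
Qed.

Lemma direct_sum_invariants : direct_sum DK DKp DKm.
Proof.
exact: (direct_sum_nilpotent_pair four_neq0 GpGp GmGm GpGm DK_subspace DK_Gplus
  DK_Gminus).
Qed.

Lemma iso_onto_Gplus_invariants : iso_onto (Gplus Gam) DKm DKp.
Proof.
have := iso_onto_nilpotent_pair four_neq0 GpGp GmGm GpGm DK_subspace DK_Gplus
  DK_Gminus setT setT subspace_setT (fun _ _ => I) (fun _ _ => I).
by rewrite !setIT.
Qed.

Lemma iso_onto_Gminus_invariants : iso_onto (Gminus Gam) DKp DKm.
Proof.
have := iso_onto_nilpotent_pair four_neq0 GmGm GpGp GmGp DK_subspace DK_Gminus
  DK_Gplus setT setT subspace_setT (fun _ _ => I) (fun _ _ => I).
by rewrite !setIT.
Qed.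

Lemma dimS_invariants_kerGpm :
  (2 * dimS DKp)%N = dimS DK /\ (2 * dimS DKm)%N = dimS DK.
Proof.
have DKp_subspace := subspaceI DK_subspace (subspace_kerM (Gplus Gam)).
have DKm_subspace := subspaceI DK_subspace (subspace_kerM (Gminus Gam)).
have dim_mp := dimS_iso DKm_subspace DKp_subspace iso_onto_Gplus_invariants.
rewrite (dimS_direct_sum DKp_subspace DKm_subspace direct_sum_invariants) dim_mp.
by rewrite mul2n addnn.
Qed.

Lemma iso_onto_Gplus_anticomm (P : 'M[R]_32) :
  Gplus Gam * P = - (P * Gplus Gam) -> Gminus Gam * P = - (P * Gminus Gam) ->
  iso_onto (Gplus Gam) (DKm `&` fixsp P) (DKp `&` fixsp (- P)).
Proof.
move=> GpP GmP; apply: (iso_onto_nilpotent_pair four_neq0 GpGp GmGm GpGm DK_subspace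
  DK_Gplus DK_Gminus _ _ (subspace_fixsp P)) => w; first exact: fixsp_anticomm.
have GmNP : Gminus Gam * - P = - (- P * Gminus Gam) by rewrite mulrN mulNr GmP.
by move/(fixsp_anticomm _ _ _ GmNP); rewrite opprK.
Qed.

End InvariantSpinors.

End Clifford.


Theorem mainTheorem7 (R : realType) (Gam : 'I_11 -> 'M[R]_32)
  (K N : set 'M[R]_32) :
  clifford_rep Gam ->
  is_subgroup K -> K `<=` Spin8 Gam ->
  is_subgroup N -> N `<=` NullRot Gam -> (exists n, N n /\ n <> 1) ->
  let G := gen_subgroup (K `|` N) in
  let DK := invariants K in
  let DKp := DK `&` kerM (Gplus Gam) in
  let DKm := DK `&` kerM (Gminus Gam) in
  (* (i) *)
  (direct_sum DK DKp DKm /\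
   iso_onto (Gplus Gam) DKm DKp /\ iso_onto (Gminus Gam) DKp DKm /\
   (2 * dimS DKp)%N = dimS DK /\ (2 * dimS DKm)%N = dimS DK /\
   ~~ odd (dimS DK)) /\
  (* (ii) *)
  (invariants G = DKp /\ (2 * dimS (invariants G))%N = dimS DK) /\
  (* (iii) *)
  (forall v : 'I_6 -> 'rV[R]_11,
     (forall k l : 'I_6, k != l -> etaV (v k) (v l) = 0) ->
     (forall k : 'I_6, etaV (v k) (v k) = 1 \/ etaV (v k) (v k) = -1) ->
     (exists a : 'I_6 -> R, evec R ord0 = \sum_(k < 6) a k *: v k) ->
     (exists a : 'I_6 -> R, evec R i9 = \sum_(k < 6) a k *: v k) ->
     let P := \prod_(k < 6) GamV Gam (v k) in
     iso_onto (Gplus Gam) (DKm `&` fixsp P) (DKp `&` fixsp (- P)) /\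
     iso_onto (Gplus Gam) (DKm `&` fixsp (- P)) (DKp `&` fixsp P) /\
     (2 * dimS (fixsp P `&` invariants G) <= dimS DK)%N).
Proof.
move=> [Gam_anticomm _] K_subgroup K_Spin8 N_subgroup N_NullRot N_nontrivial.
move=> G DK DKp DKm.
have [dim_DKp dim_DKm] := dimS_invariants_kerGpm Gam_anticomm K_Spin8.
have DG : invariants G = DKp.
  rewrite /G invariants_gen_subgroup; last first.
    by move=> g [/(subgroup_unitmx K_subgroup)|/(subgroup_unitmx N_subgroup)].
  by rewrite invariants_setU (invariants_NullRot Gam_anticomm N_NullRot N_nontrivial).
split.
  split; first exact: direct_sum_invariants.
  split; first exact: iso_onto_Gplus_invariants.
  split; first exact: iso_onto_Gminus_invariants.
  by do 2 split=> //; rewrite -dim_DKp mul2n odd_double.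
split; first by rewrite DG.
move=> v v_orth _ e0_span e9_span P.
have [GpP GmP] := Gpm_volume_anticomm Gam_anticomm v_orth e0_span e9_span.
rewrite -/P -signr_odd /= expr1 !scaleN1r in GpP GmP.
split; first exact: iso_onto_Gplus_anticomm.
split.
  rewrite -{2}[P]opprK; apply: iso_onto_Gplus_anticomm => //.
  - by rewrite mulrN mulNr GpP.
  - by rewrite mulrN mulNr GmP.
have DKp_subspace : is_subspace DKp :=
  subspaceI (subspace_invariants K) (subspace_kerM _).
rewrite DG -dim_DKp leq_mul2l /=.
by apply: (dimS_le (subspaceI (subspace_fixsp P) DKp_subspace) DKp_subspace) => w [].
Qed.
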